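(* Let $f:V_n^{(p)}\to\mathbb{F}_p$ be an $s$-plateaued function belonging to $\mathscr{F}$, with dual $f^*$. Then: (1) for every $a\in\mathbb{F}_p^*$ and $\alpha\in V_n^{(p)}$: if $\alpha\notin\mathrm{Supp}(\widehat{\chi_f})$ then $a\alpha\notin\mathrm{Supp}(\widehat{\chi_f})$; if $\alpha\in B_+(f)$ then $a\alpha\in B_+(f)$; if $\alpha\in B_-(f)$ then $a\alpha\in B_-(f)$; (2) there is a positive integer $h$ with $\gcd(h-1,p-1)=1$ such that $f^*(a\alpha)=a^hf^*(\alpha)$ for all $a\in\mathbb{F}_p^*$, $\alpha\in B_+(f)$, and there is a positive integer $h'$ with $\gcd(h'-1,p-1)=1$ such that $f^*(a\alpha)=a^{h'}f^*(\alpha)$ for all $a\in\mathbb{F}_p^*$, $\alpha\in B_-(f)$; (3) the types of $f$ and $f^*$ are the same if $p^{n+s}\equiv1\pmod4$, and different if $p^{n+s}\equiv3\pmod4$.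
   Context: Let $p$ be an odd prime, $\mathbb{F}_p^*=\mathbb{F}_p\setminus\{0\}$, $V_n^{(p)}$ an $n$-dimensional $\mathbb{F}_p$-vector space with a non-degenerate symmetric bilinear form $\langle\cdot,\cdot\rangle_n$, $\xi_p=e^{2\pi\sqrt{-1}/p}$. For $f:V_n^{(p)}\to\mathbb{F}_p$, $\widehat{\chi_f}(\alpha)=\sum_x\xi_p^{f(x)-\langle\alpha,x\rangle_n}$; $f$ is $s$-plateaued ($0\le s\le n$) if $|\widehat{\chi_f}(\alpha)|\in\{0,p^{(n+s)/2}\}$ for all $\alpha$, with $\mathrm{Supp}(\widehat{\chi_f})$ where $p^{(n+s)/2}$ is attained. $\mu=1$ if $p^{n+s}\equiv1\pmod4$, else $\sqrt{-1}$. For $\alpha\in\mathrm{Supp}(\widehat{\chi_f})$, $\widehat{\chi_f}(\alpha)=\epsilon_\alpha\mu p^{(n+s)/2}\xi_p^{f^*(\alpha)}$ with unique $\epsilon_\alpha\in\{\pm1\}$, $f^*(\alpha)\in\mathbb{F}_p$; $B_\pm(f)=\{\alpha\in\mathrm{Supp}(\widehat{\chi_f}):\epsilon_\alpha=\pm1\}$; when $0\in\mathrm{Supp}(\widehat{\chi_f})$, the type of $f$ is $(+)$ if $\epsilon_0=1$ and $(-)$ if $\epsilon_0=-1$. $f^*$ is bent relative to $\mathrm{Supp}(\widehat{\chi_f})$ if $\widehat{\chi_{f^*}}(\alpha)=\sum_{x\in\mathrm{Supp}(\widehat{\chi_f})}\xi_p^{f^*(x)-\langle\alpha,x\rangle_n}$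 has absolute value $p^{(n-s)/2}$ for all $\alpha$; then $\widehat{\chi_{f^*}}(\alpha)=\epsilon^*_\alpha\mu p^{(n-s)/2}\xi_p^{f(-\alpha)}$, $\epsilon^*_\alpha\in\{\pm1\}$, $B_\pm(f^* )=\{\alpha:\epsilon^*_\alpha=\pm1\}$, and the type of $f^*$ is $(+)$ if $\epsilon^*_0=1$, $(-)$ if $\epsilon^*_0=-1$. Class $\mathscr{F}$: $s$-plateaued $f$ with (1) $f(0)=0$; (2) $f^*$ bent relative to $\mathrm{Supp}(\widehat{\chi_f})$; (3) $aB_\pm(f^* )\subseteq B_\pm(f^* )$ for all $a\in\mathbb{F}_p^*$; (4) integers $2\le t,t'\le p-1$, $\gcd(t-1,p-1)=\gcd(t'-1,p-1)=1$, $f(ax)=a^tf(x)$ for $a\in\mathbb{F}_p^*,x\in B_+(f^* )$ and $f(ax)=a^{t'}f(x)$ for $a\in\mathbb{F}_p^*,x\in B_-(f^* )$. Functions in $\mathscr{F}$ satisfy $0\in\mathrm{Supp}(\widehat{\chi_f})$. *)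

(* F_p = 'F_p, V_n^{(p)} = 'rV['F_p]_n, complex numbers = algC. *)
From HB Require Import structures.
From mathcomp Require Import all_boot all_order all_algebra all_field.
Set Implicit Arguments.
Unset Strict Implicit.
Unset Printing Implicit Defensive.
Import Order.TTheory GRing.Theory Num.Theory.
Local Open Scope ring_scope.

Section Plateaued.
Variables (p n : nat).

Definition V := 'rV['F_p]_n.

(* The bilinear form <a,x>_n given by a (symmetric, invertible) Gram matrix M. *)
Definition bform (M : 'M['F_p]_n) (a x : V) : 'F_p := (a *m M *m x^T) 0 0.

Definition nondeg_symmetric (M : 'M['F_p]_n) : Prop :=
  M^T = M /\ M \in unitmx.

(* xi_p = e^{2 pi i / p}: p.-root (-1) is e^{i pi / p} (minimal nonneg. argument). *)
Definition xi : algC := (p.-root (-1)) ^+ 2.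

Definition xiF (c : 'F_p) : algC := xi ^+ (val c).

Definition walsh (M : 'M['F_p]_n) (f : V -> 'F_p) (alpha : V) : algC :=
  \sum_(x : V) xiF (f x - bform M alpha x).

Definition ppow (k : nat) : algC := sqrtC ((p ^ k)%:R).

Definition plateaued (M : 'M['F_p]_n) (s : nat) (f : V -> 'F_p) : Prop :=
  (s <= n)%N /\
  forall alpha, `|walsh M f alpha| = 0 \/ `|walsh M f alpha| = ppow (n + s).

Definition supp (M : 'M['F_p]_n) (s : nat) (f : V -> 'F_p) : {set V} :=
  [set alpha | `|walsh M f alpha| == ppow (n + s)].

Definition mu (s : nat) : algC := if ((p ^ (n + s)) %% 4 == 1)%N then 1 else 'i.

Definition is_dual (M : 'M['F_p]_n) (s : nat) (f : V -> 'F_p)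
    (eps : V -> algC) (fstar : V -> 'F_p) : Prop :=
  forall alpha, alpha \in supp M s f ->
    (eps alpha = 1 \/ eps alpha = -1) /\
    walsh M f alpha = eps alpha * mu s * ppow (n + s) * xiF (fstar alpha).

Definition Bplus M s f (eps : V -> algC) : {set V} :=
  [set alpha in supp M s f | eps alpha == 1].
Definition Bminus M s f (eps : V -> algC) : {set V} :=
  [set alpha in supp M s f | eps alpha == -1].

Definition walsh_dual (M : 'M['F_p]_n) (s : nat) (f : V -> 'F_p)
    (fstar : V -> 'F_p) (alpha : V) : algC :=
  \sum_(x in supp M s f) xiF (fstar x - bform M alpha x).

Definition bent_rel (M : 'M['F_p]_n) (s : nat) (f fstar : V -> 'F_p) : Prop :=
  forall alpha, `|walsh_dual M s f fstar alpha| = ppow (n - s).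

Definition is_dual_sign (M : 'M['F_p]_n) (s : nat) (f fstar : V -> 'F_p)
    (epss : V -> algC) : Prop :=
  forall alpha, (epss alpha = 1 \/ epss alpha = -1) /\
    walsh_dual M s f fstar alpha = epss alpha * mu s * ppow (n - s) * xiF (f (- alpha)).

Definition BSplus (epss : V -> algC) : {set V} := [set alpha | epss alpha == 1].
Definition BSminus (epss : V -> algC) : {set V} := [set alpha | epss alpha == -1].

(* type (+) of f iff eps_0 = 1; type (+) of f* iff eps*_0 = 1 *)
Definition type_plus (e : V -> algC) : bool := e 0 == 1.

Definition classF (M : 'M['F_p]_n) (s : nat) (f fstar : V -> 'F_p)
    (epss : V -> algC) : Prop :=
  [/\ f 0 = 0,
      bent_rel M s f fstar,
      (forall a : 'F_p, a != 0 -> forall x, x \in BSplus epss -> a *: x \in BSplus epss)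
        /\ (forall a : 'F_p, a != 0 -> forall x, x \in BSminus epss -> a *: x \in BSminus epss)
    & exists t t' : nat,
      [/\ (2 <= t <= p - 1)%N /\ (2 <= t' <= p - 1)%N,
          gcdn (t - 1) (p - 1) = 1%N, gcdn (t' - 1) (p - 1) = 1%N,
          (forall a : 'F_p, a != 0 -> forall x, x \in BSplus epss -> f (a *: x) = a ^+ t * f x)
        & (forall a : 'F_p, a != 0 -> forall x, x \in BSminus epss -> f (a *: x) = a ^+ t' * f x)]].

End Plateaued.

From HB Require Import structures.
From mathcomp Require Import all_boot all_order all_algebra all_field.
From mathcomp Require Import zify ring.
Set Implicit Arguments.
Unset Strict Implicit.
Unset Printing Implicit Defensive.
Import Order.TTheory GRing.Theory Num.Theory.
Local Open Scope ring_scope.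

(* Split the Walsh transform of f along the signs of the dual transform: for sg = +-1 let
   W_sg(z) = sum_(eps*(y) = sg) xi^(f(y) - <z,y>).  Fourier inversion of the bent function f*
   gives W_1 - W_-1 = mu^2 [z in Supp] mu p^((n+s)/2) xi^(f*(z)), so W_sg(z) vanishes unless z is
   in Supp with eps_z = sg mu^2, and then it is the whole Walsh coefficient of f at z.
   On the class eps* = sg, f is homogeneous of a degree t with gcd(t - 1, p - 1) = 1; if
   u (t - 1) = 1 mod p - 1, rescaling y by a^u shows that the Galois automorphism
   xi |-> xi^(a^(u+1)) maps W_sg(z) to W_sg(a z).  This gives the stability of Supp and B_+-
   under scaling and, after squaring away the sign of the image of mu p^((n+s)/2), the
   homogeneity f*(a z) = a^(u+1) f*(z).  Finally t is even, so f is even on the class of eps*_0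
   and W_(eps*_0)(0) = 1 + 2 (algebraic integer) is nonzero, whence eps_0 = eps*_0 mu^2. *)

Section Signs.
Variable R : numDomainType.
Implicit Types a b : R.

Lemma sign_addr_neq0 a b : a ^+ 2 = 1 -> b ^+ 2 = 1 -> (a + b != 0) = (a == b).
Proof.
move=> a2 b2; apply/idP/eqP => [ab_neq0|->].
  apply/eqP; rewrite -subr_eq0; have : (a - b) * (a + b) == 0 by rewrite -subr_sqr a2 b2 subrr.
  by rewrite mulf_eq0 (negbTE ab_neq0) orbF.
rewrite -mulr2n mulrn_eq0 /=; apply: contra_eq_neq b2 => ->.
by rewrite expr0n eq_sym oner_eq0.
Qed.

Lemma sign_indicator a b : a ^+ 2 = 1 -> b ^+ 2 = 1 -> (a == b)%:R *+ 2 = 1 + a * b.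
Proof.
move=> a2 b2; have [->|] := eqVneq a b; first by rewrite -expr2 b2.
rewrite -sign_addr_neq0 // negbK addr_eq0 => /eqP->.
by rewrite mulNr -expr2 b2 subrr mulr0n mul0rn.
Qed.

Lemma sign_oppr_eq1 a : a ^+ 2 = 1 -> (- a == 1) = (a != 1).
Proof. by move=> a2; rewrite eqr_oppLR -addr_eq0 -sign_addr_neq0 ?expr1n ?negbK. Qed.

End Signs.

Lemma Aint_double_add1_neq0 (X : algC) : X \in Aint -> 1 + X *+ 2 != 0.
Proof.
move=> X_Aint; apply/eqP => X2.
have X_rat : X \in Crat.
  have two_C : 2%:R != 0 :> algC by rewrite pnatr_eq0.
  rewrite -[X](mulfK two_C) mulr_natr.
  by rewrite (canRL (addKr 1) X2) addr0 rpred_div ?rpredN1 ?rpred_nat.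
have /intrP[m Xm] := Cint_rat_Aint X_rat X_Aint.
move/eqP: X2; rewrite Xm -[1]/(1%:~R) -rmorphMn -rmorphD intr_eq0 => /eqP.
lia.
Qed.

Lemma sum_opp_pairs (G : finZmodType) (R : nmodType) (P : pred G) (F : G -> R) :
  (forall y, P y -> P (- y) /\ y != - y) ->
  \sum_(y | P y) F y
    = \sum_(y | P y && (enum_rank y < enum_rank (- y))%N) (F y + F (- y)).
Proof.
(* enum_rank selects one element of each pair {y, - y}. *)
move=> P_opp; rewrite big_split (bigID (fun y => enum_rank y < enum_rank (- y))%N) /=.
congr (_ + _); rewrite (reindex_inj (inv_inj opprK)) /=.
apply: eq_bigl => y; rewrite opprK.
have [Py|NPy] := boolP (P y); last first.
  by apply: contraNF NPy => /andP[/P_opp[]]; rewrite opprK.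
have [-> y_neq] := P_opp y Py.
by rewrite -leqNgt leq_eqVlt val_eqE (inj_eq enum_rank_inj) (negbTE y_neq).
Qed.

Lemma coprime_pred_even p t : odd p -> coprime (t - 1) (p - 1) -> ~~ odd t.
Proof.
move=> p_odd /eqP t_coprime; apply/negP => t_odd.
suff : (2 %| gcdn (t - 1) (p - 1))%N by rewrite t_coprime.
by rewrite dvdn_gcd !dvdn2 !oddB ?t_odd ?p_odd ?odd_gt0.
Qed.

Section BilinearForm.
Variables (p n : nat) (M : 'M['F_p]_n).
Implicit Types a x z : V p n.

Lemma bformDl a1 a2 x : bform M (a1 + a2) x = bform M a1 x + bform M a2 x.
Proof. by rewrite /bform !mulmxDl mxE. Qed.

Lemma bformZl c a x : bform M (c *: a) x = c * bform M a x.
Proof. by rewrite /bform -!scalemxAl mxE. Qed.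

Lemma bformZr c a x : bform M a (c *: x) = c * bform M a x.
Proof. by rewrite /bform linearZ /= -scalemxAr mxE. Qed.

Lemma bformBr a x z : bform M a (x - z) = bform M a x - bform M a z.
Proof. by rewrite /bform linearB /= mulmxBr !mxE. Qed.

Lemma bform0l x : bform M 0 x = 0.
Proof. by rewrite /bform !mul0mx mxE. Qed.

Lemma bform0r a : bform M a 0 = 0.
Proof. by rewrite /bform trmx0 mulmx0 mxE. Qed.

Lemma bformC a x : M^T = M -> bform M a x = bform M x a.
Proof.
move=> M_sym; rewrite /bform -[in LHS](trmxK (a *m M *m x^T)) mxE.
by rewrite !trmx_mul trmxK M_sym mulmxA.
Qed.

Lemma bform_eq0 x : M \in unitmx -> (forall a, bform M a x = 0) -> x = 0.
Proof.
move=> M_unit x_orth.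
have Mx0 : M *m x^T = 0.
  apply/matrixP => i j; rewrite (ord1 j) [RHS]mxE -(x_orth (delta_mx 0 i)).
  by rewrite /bform -mulmxA -rowE [RHS]mxE.
by apply: trmx_inj; rewrite trmx0 -(mulKmx M_unit x^T) Mx0 mulmx0.
Qed.

End BilinearForm.

Section PrimeField.
Variable p : nat.
Hypotheses (p_pr : prime p) (p_odd : odd p).

Let p_gt0 : (0 < p)%N := prime_gt0 p_pr.
Let p_gt1 : (1 < p)%N := prime_gt1 p_pr.
Let p_gt2 : (2 < p)%N. Proof. by case: p p_gt1 p_odd => [|[|[|]]]. Qed.

Lemma xi_prim : p.-primitive_root (xi p).
Proof.
have xi_p : xi p ^+ p = 1 by rewrite /xi -exprM mulnC exprM rootCK // sqrrN expr1n.
have N1_neq1 : (-1 == 1 :> algC) = false by rewrite (lt_eqF (lt_trans (ltrN10 algC) ltr01)).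
have xi_neq1 : xi p != 1.
  rewrite /xi sqrf_eq1 rootC_eq1 // N1_neq1 /=.
  by apply/eqP => r_N1; have := rootC_lt0 (-1 : algC) p_gt1; rewrite r_N1 ltrN10.
have [m prim_m m_dvd] := prim_order_exists p_gt0 xi_p.
move/primeP: p_pr => [_ /(_ m m_dvd)/orP[/eqP m1|/eqP m_p]]; last by rewrite m_p in prim_m.
by move: (prim_expr_order prim_m) xi_neq1; rewrite m1 expr1 => ->; rewrite eqxx.
Qed.

Let Fp_val_lt (c : 'F_p) : (val c < p)%N.
Proof. by rewrite -[X in (_ < X)%N](Fp_cast p_pr) ltn_ord. Qed.

Lemma xiF_nat k : xiF (k%:R : 'F_p) = xi p ^+ k.
Proof. by rewrite /xiF /= val_Fp_nat // (prim_expr_mod xi_prim). Qed.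

Lemma xiF0 : xiF (0 : 'F_p) = 1.
Proof. by rewrite /xiF expr0. Qed.

Lemma xiFD : {morph @xiF p : a b / a + b >-> a * b}.
Proof. by move=> a b; rewrite -[a]natr_Zp -[b]natr_Zp -natrD !xiF_nat exprD. Qed.

Lemma xiFXn (a : 'F_p) k : xiF a ^+ k = xiF (a * k%:R).
Proof. by rewrite -[a in RHS]natr_Zp -natrM xiF_nat exprM. Qed.

Lemma xiF_unity (c : 'F_p) : xiF c ^+ p = 1.
Proof. by rewrite xiFXn pchar_Fp_0 // mulr0 xiF0. Qed.

Lemma xiF_neq0 (c : 'F_p) : xiF c != 0.
Proof. by rewrite expf_neq0 // (prim_root_eq0 xi_prim) -lt0n. Qed.

Lemma xiF_inj : injective (@xiF p).
Proof.
move=> a b /eqP; rewrite /xiF (eq_prim_root_expr xi_prim) !modn_small //.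
by move=> /eqP /val_inj.
Qed.

Let two_neq0 : (2%:R : 'F_p) != 0.
Proof. by rewrite -(dvdn_pcharf (pchar_Fp p_pr)) gtnNdvd. Qed.

Lemma sqr_xiF_inj : injective (fun c : 'F_p => xiF c ^+ 2).
Proof.
by move=> a b /=; rewrite !xiFXn => /xiF_inj /(mulIf two_neq0).
Qed.

Lemma xiF_Aint (c : 'F_p) : xiF c \in Aint.
Proof. by apply: (Aint_unity_root p_gt0); rewrite unity_rootE xiF_unity. Qed.

Lemma xiF_aut (b : 'F_p) : b != 0 ->
  {u : {rmorphism algC -> algC} | forall c, u (xiF c) = xiF (b * c)}.
Proof.
move=> b_neq0; have b_coprime : coprime (val b) p.
  by rewrite coprime_sym -unitFpE // natr_Zp unitfE.
have [u uE] := Qn_aut_exists b_coprime.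
by exists u => c; rewrite uE ?xiF_unity // xiFXn natr_Zp mulrC.
Qed.

Lemma Fp_expS_mul k (a : 'F_p) : a ^+ (k * (p - 1)).+1 = a.
Proof.
have a_p : a ^+ p = a by rewrite -{2}(expf_card a) card_Fp.
elim: k => [|k IHk]; first exact: expr1.
by rewrite mulSn -addnS exprD IHk -exprSr subn1 prednK.
Qed.

Lemma Fp_exp_inverse t : (0 < t)%N -> coprime t (p - 1) ->
  exists u, coprime u (p - 1) /\ forall a : 'F_p, (a ^+ u) ^+ t = a.
Proof.
move=> t_gt0 t_coprime; case: (egcdnP (p - 1) t_gt0) => u k uE _.
rewrite (eqP t_coprime) in uE.
exists u; split; last by move=> a; rewrite -exprM uE addn1 Fp_expS_mul.
have : coprime (u * t) (p - 1) by rewrite coprime_sym /coprime uE gcdnMDl gcdn1.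
by rewrite coprimeMl => /andP[].
Qed.

Lemma sum_xiF_morph_eq0 (G : finZmodType) (g : G -> 'F_p) (a0 : G) :
  {morph g : x y / x + y} -> g a0 != 0 -> \sum_a xiF (g a) = 0.
Proof.
move=> gD ga0_neq0; set S := \sum_a _.
have S_shift : S * xiF (g a0) = S.
  rewrite mulr_suml [RHS](reindex_inj (addIr a0)) /=.
  by apply: eq_bigr => a _; rewrite gD xiFD.
apply/eqP; move/eqP: S_shift; rewrite -subr_eq0 -{2}[S]mulr1 -mulrBr mulf_eq0 subr_eq0.
by rewrite -xiF0 (inj_eq xiF_inj) (negbTE ga0_neq0) orbF.
Qed.

Lemma vector_neq_opp (U : lmodType 'F_p) (y : U) : y != 0 -> y != - y.
Proof.
move=> y_neq0; apply: contra y_neq0 => /eqP y_opp.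
have : (2%:R : 'F_p) *: y == 0 by rewrite scaler_nat mulr2n {1}y_opp addNr.
by rewrite scaler_eq0 (negbTE two_neq0).
Qed.

Lemma sum_xiF_even_neq0 (G : finZmodType) (P : pred G) (F : G -> 'F_p) :
  (forall y : G, y != 0 -> y != - y) ->
  P 0 -> (forall y, P y -> P (- y) /\ F (- y) = F y) -> F 0 = 0 ->
  \sum_(y | P y) xiF (F y) != 0.
Proof.
move=> opp_neq P0 P_even F0.
rewrite (bigD1 0) //= F0 xiF0 sum_opp_pairs => [|y /andP[Py y_neq0]]; last first.
  by rewrite (P_even y Py).1 oppr_eq0 y_neq0 opp_neq.
under eq_bigr => y /andP[/andP[Py _] _] do rewrite (P_even y Py).2 -mulr2n.
by rewrite sumrMnl Aint_double_add1_neq0 // rpred_sum // => y _; apply: xiF_Aint.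
Qed.

Section Characters.
Variables (n : nat) (M : 'M['F_p]_n).
Hypothesis M_unit : M \in unitmx.

Lemma sum_xiF_bform w : \sum_a xiF (bform M a w) = if w == 0 then (p ^ n)%:R else 0.
Proof.
have [->|w_neq0] := eqVneq w 0.
  by under eq_bigr do rewrite bform0r xiF0; rewrite sumr_const card_mx card_Fp // mul1n.
have /existsP[a0 a0w] : [exists a, bform M a w != 0].
  apply: contraR w_neq0 => /existsPn w_orth.
  apply/eqP; apply: (bform_eq0 M_unit) => a.
  by apply/eqP/negPn/w_orth.
by apply: (sum_xiF_morph_eq0 (g := bform M ^~ w) _ a0w) => a1 a2; rewrite bformDl.
Qed.

Lemma walsh_inversion (S : {set V p n}) (g : V p n -> 'F_p) z :
  \sum_a (\sum_(x in S) xiF (g x - bform M a x)) * xiF (bform M a z)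
    = (p ^ n)%:R * ((z \in S)%:R * xiF (g z)).
Proof.
under eq_bigr do rewrite mulr_suml.
rewrite exchange_big /=.
under eq_bigr => x _.
  under eq_bigr do rewrite -xiFD addrAC -addrA -bformBr xiFD.
  rewrite -mulr_sumr sum_xiF_bform subr_eq0.
  over.
have [zS|zNS] := boolP (z \in S).
  rewrite (bigD1 z) //= eqxx big1 ?addr0 => [|x /andP[_ /negbTE]].
    by rewrite mul1r mulrC.
  by rewrite eq_sym => ->; rewrite mulr0.
rewrite mul0r mulr0 big1 // => x xS.
by case: eqP zNS => [->|_]; rewrite ?xS ?mulr0.
Qed.

End Characters.

End PrimeField.

Section Normalization.
Variables (p n s : nat).
Hypothesis p_gt0 : (0 < p)%N.

Lemma sqr_mu : mu p n s ^+ 2 = if (p ^ (n + s) %% 4 == 1)%N then 1 else -1.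
Proof. by rewrite /mu; case: ifP; rewrite ?expr1n ?sqrCi. Qed.

Lemma mu_neq0 : mu p n s != 0.
Proof. by rewrite /mu; case: ifP; rewrite ?oner_eq0 ?neq0Ci. Qed.

Lemma ppow_neq0 k : ppow p k != 0.
Proof. by rewrite sqrtC_eq0 pnatr_eq0 expn_eq0 negb_and -lt0n p_gt0. Qed.

Lemma ppow_subnD : (s <= n)%N -> ppow p (n - s) * ppow p (n + s) = (p ^ n)%:R.
Proof.
move=> s_le_n; rewrite /ppow -sqrtCM ?nnegrE ?ler0n // -natrM -expnD.
have -> : (n - s + (n + s) = n * 2)%N by lia.
by rewrite expnM natrX sqrCK ?ler0n.
Qed.

End Normalization.

Section ClassF.
Variables (p n s : nat) (M : 'M['F_p]_n) (f fstar : V p n -> 'F_p) (eps epss : V p n -> algC).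
Hypotheses (p_pr : prime p) (p_odd : odd p) (M_nondeg : nondeg_symmetric M).
Hypotheses (f_plat : plateaued M s f) (f_dual : is_dual M s f eps fstar).
Hypotheses (fstar_dual : is_dual_sign M s f fstar epss) (f_F : classF M s f fstar epss).

Local Notation S := (supp M s f).
Local Notation K := (mu p n s * ppow p (n + s)).
Local Notation eta := (mu p n s ^+ 2).

Let p_gt0 : (0 < p)%N := prime_gt0 p_pr.

Lemma eta_sign : eta ^+ 2 = 1.
Proof. by rewrite sqr_mu; case: ifP; rewrite ?sqrrN expr1n. Qed.

Lemma eps_sign z : z \in S -> eps z ^+ 2 = 1.
Proof. by move/f_dual=> [[]-> _]; rewrite ?sqrrN expr1n. Qed.

Lemma epss_sign y : epss y ^+ 2 = 1.
Proof. by case: (fstar_dual y) => [[]-> _]; rewrite ?sqrrN expr1n. Qed.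

Lemma K_neq0 : K != 0.
Proof. by rewrite mulf_neq0 ?mu_neq0 ?ppow_neq0. Qed.

Lemma sqr_K : K ^+ 2 = eta * (p ^ (n + s))%:R.
Proof. by rewrite exprMn sqrtCK. Qed.

Lemma rmorph_sqr_K (phi : {rmorphism algC -> algC}) : phi (K ^+ 2) = K ^+ 2.
Proof. by rewrite sqr_K rmorphM rmorph_nat sqr_mu; case: ifP; rewrite ?rmorph1 ?rmorphN1. Qed.

Lemma epssZ a y : a != 0 -> epss (a *: y) = epss y.
Proof.
move=> a_neq0; case: f_F => _ _ [Bplus_scale Bminus_scale] _.
case: (fstar_dual y).1 => epss_y; rewrite epss_y; apply/eqP.
  by have := Bplus_scale a a_neq0 y; rewrite !inE epss_y eqxx; apply.
by have := Bminus_scale a a_neq0 y; rewrite !inE epss_y eqxx; apply.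
Qed.

Lemma walshE z : walsh M f z = (z \in S)%:R * eps z * K * xiF (fstar z).
Proof.
have [zS|zNS] := boolP (z \in S); first by rewrite (f_dual zS).2 mul1r !mulrA.
rewrite !mul0r; case: (f_plat.2 z) => [/eqP|walsh_z]; first by rewrite normr_eq0 => /eqP.
by move: zNS; rewrite inE walsh_z eqxx.
Qed.

Lemma signed_walshE z :
  \sum_y epss y * xiF (f y - bform M z y) = eta * ((z \in S)%:R * K * xiF (fstar z)).
Proof.
set X := \sum_y _.
have dual_inv : mu p n s * ppow p (n - s) * X = (p ^ n)%:R * ((z \in S)%:R * xiF (fstar z)).
  have inversion : \sum_a walsh_dual M s f fstar a * xiF (bform M a z)
      = (p ^ n)%:R * ((z \in S)%:R * xiF (fstar z)).
    exact (walsh_inversion p_pr M_nondeg.2 S fstar z).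
  rewrite -inversion; under [RHS]eq_bigr do rewrite (fstar_dual _).2.
  rewrite [RHS](reindex_inj oppr_inj) /= mulr_sumr; apply: eq_bigr => y _.
  rewrite opprK -scaleN1r epssZ ?oppr_eq0 ?oner_eq0 // bformZl mulN1r bformC ?M_nondeg.1 //.
  by rewrite -[RHS]mulrA -xiFD //; ring.
have pn_neq0 : (p ^ n)%:R != 0 :> algC by rewrite pnatr_eq0 -lt0n expn_gt0 p_gt0.
suff eta_X : eta * X = (z \in S)%:R * K * xiF (fstar z).
  by rewrite -eta_X mulrA -expr2 eta_sign mul1r.
apply: (mulfI pn_neq0); rewrite -{1}(ppow_subnD p_gt0 f_plat.1).
transitivity (mu p n s * ppow p (n - s) * X * K); first by ring.
by rewrite dual_inv; ring.
Qed.

Definition walsh_part (sg : algC) (z : V p n) : algC :=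
  \sum_(y | epss y == sg) xiF (f y - bform M z y).

Lemma walsh_part_double sg z : sg ^+ 2 = 1 ->
  walsh_part sg z *+ 2 = (z \in S)%:R * (eps z + sg * eta) * K * xiF (fstar z).
Proof.
move=> sg2; transitivity (walsh M f z + sg * \sum_y epss y * xiF (f y - bform M z y)).
  rewrite /walsh_part -sumrMnl big_mkcond mulr_sumr -big_split /=.
  apply: eq_bigr => y _; rewrite mulrA -{2}[xiF _]mul1r -mulrDl (mulrC sg).
  rewrite -sign_indicator ?epss_sign //.
  by case: eqP; rewrite ?mulr0n ?mul0rn ?mul0r // mulr_natl.
by rewrite walshE signed_walshE; ring.
Qed.

Lemma walsh_part_neq0 sg z : sg ^+ 2 = 1 ->
  (walsh_part sg z != 0) = (z \in S) && (eps z == sg * eta).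
Proof.
move=> sg2; have -> : (walsh_part sg z != 0) = (walsh_part sg z *+ 2 != 0).
  by rewrite mulrn_eq0.
rewrite walsh_part_double //.
have [zS|_] := boolP (z \in S); last by rewrite !mul0r eqxx.
rewrite mul1r mulf_eq0 (negbTE (xiF_neq0 p_pr _)) orbF mulf_eq0 (negbTE K_neq0) orbF.
by rewrite sign_addr_neq0 ?eps_sign // exprMn sg2 eta_sign mulr1.
Qed.

Lemma walsh_part_supp sg z : sg ^+ 2 = 1 -> z \in S -> eps z = sg * eta ->
  walsh_part sg z = eps z * K * xiF (fstar z).
Proof.
move=> sg2 zS ez; apply: (pmulrnI (isT : (0 < 2)%N)).
by rewrite walsh_part_double // zS -ez mul1r -mulr2n -!mulrnAl.
Qed.

Definition homogeneous_on (sg : algC) (t : nat) :=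
  forall a : 'F_p, a != 0 -> forall y, epss y = sg -> f (a *: y) = a ^+ t * f y.

Lemma homogeneous_exponents sg : sg ^+ 2 = 1 -> exists t u,
  [/\ (0 < t)%N, ~~ odd t, coprime u (p - 1), homogeneous_on sg t
    & forall a : 'F_p, (a ^+ u) ^+ (t - 1) = a].
Proof.
have exponents k : (1 < k)%N -> gcdn (k - 1) (p - 1) = 1%N -> homogeneous_on sg k ->
    exists t u, [/\ (0 < t)%N, ~~ odd t, coprime u (p - 1), homogeneous_on sg t
      & forall a : 'F_p, (a ^+ u) ^+ (t - 1) = a].
  move=> k_gt1 /eqP k_coprime homog; have k1_gt0 : (0 < k - 1)%N by rewrite subn_gt0.
  have [u [u_coprime u_inv]] := Fp_exp_inverse p_pr k1_gt0 k_coprime.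
  by exists k, u; rewrite (ltnW k_gt1) (coprime_pred_even p_odd k_coprime).
case: f_F => _ _ _ [t [t' [[/andP[t_gt1 _] /andP[t'_gt1 _]] t_co t'_co homog homog']]].
move/eqP; rewrite sqrf_eq1 => /orP[]/eqP sgE.
  by apply: exponents t_gt1 t_co _ => a a_neq0 y epss_y; apply: homog; rewrite // inE epss_y sgE.
by apply: exponents t'_gt1 t'_co _ => a a_neq0 y epss_y; apply: homog'; rewrite // inE epss_y sgE.
Qed.

Section HomogeneousPart.
Variables (sg : algC) (t u : nat).
Hypotheses (sg2 : sg ^+ 2 = 1) (t_gt0 : (0 < t)%N) (f_homog : homogeneous_on sg t).
Hypothesis u_inv : forall a : 'F_p, (a ^+ u) ^+ (t - 1) = a.

Lemma walsh_part_galois a : a != 0 -> exists phi : {rmorphism algC -> algC},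
  (forall c, phi (xiF c) = xiF (a ^+ u.+1 * c))
  /\ forall z, phi (walsh_part sg z) = walsh_part sg (a *: z).
Proof.
move=> a_neq0; set b := a ^+ u.
have b_neq0 : b != 0 by rewrite expf_neq0.
(* b ^+ t = a * b, so the substitution y := b *: y multiplies f y - <z, y> by a ^+ u.+1. *)
have b_t : b ^+ t = a * b by rewrite -(subnK t_gt0) exprD u_inv expr1.
have [phi phiE] := xiF_aut p_pr (expf_neq0 u.+1 a_neq0).
exists phi; split=> // z.
rewrite rmorph_sum [RHS](reindex_inj (scalerI b_neq0)) /=.
apply: eq_big => [y|y /eqP epss_y]; first by rewrite epssZ.
by rewrite phiE f_homog // bformZl bformZr b_t exprS /b; congr xiF; ring.
Qed.

Lemma walsh_part_scale_neq0 a z : a != 0 ->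
  (walsh_part sg (a *: z) != 0) = (walsh_part sg z != 0).
Proof. by move=> a_neq0; have [phi [_ <-]] := walsh_part_galois a_neq0; rewrite fmorph_eq0. Qed.

Lemma fstar_scale a z : a != 0 -> z \in S -> eps z = sg * eta ->
  fstar (a *: z) = a ^+ u.+1 * fstar z.
Proof.
move=> a_neq0 zS ez; have [phi [phi_xiF phi_W]] := walsh_part_galois a_neq0.
have /andP[azS /eqP eaz] : (a *: z \in S) && (eps (a *: z) == sg * eta).
  by rewrite -walsh_part_neq0 // walsh_part_scale_neq0 // walsh_part_neq0 // zS ez eqxx.
(* phi K is only known up to sign, but phi (K ^+ 2) = K ^+ 2. *)
have sqr_W c : (eps z * K * xiF c) ^+ 2 = K ^+ 2 * xiF c ^+ 2.
  by rewrite -mulrA exprMn (eps_sign zS) mul1r exprMn.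
move: (phi_W z); rewrite !walsh_part_supp // eaz -ez => /(congr1 (fun w => w ^+ 2)).
rewrite /= -rmorphXn !sqr_W rmorphM rmorph_sqr_K rmorphXn phi_xiF.
by move/(mulfI (expf_neq0 2 K_neq0))/(sqr_xiF_inj p_pr p_odd).
Qed.

Lemma walsh_part0_neq0 : ~~ odd t -> epss 0 = sg -> walsh_part sg 0 != 0.
Proof.
move=> t_even epss0; rewrite /walsh_part; under eq_bigr do rewrite bform0l subr0.
have N1_neq0 : (-1 : 'F_p) != 0 by rewrite oppr_eq0 oner_eq0.
apply: (sum_xiF_even_neq0 p_pr) => [y||y /eqP epss_y|].
- exact: vector_neq_opp.
- by rewrite epss0.
- by rewrite -scaleN1r epssZ // epss_y f_homog // -signr_odd (negbTE t_even) mul1r.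
- by case: f_F.
Qed.

End HomogeneousPart.

Lemma supp_eps_scale a z : a != 0 -> z \in S -> a *: z \in S /\ eps (a *: z) = eps z.
Proof.
move=> a_neq0 zS; set sg := eps z * eta.
have sg2 : sg ^+ 2 = 1 by rewrite exprMn eps_sign // eta_sign mulr1.
have ez : eps z = sg * eta by rewrite -mulrA -expr2 eta_sign mulr1.
have [t [u [t_gt0 _ _ homog u_inv]]] := homogeneous_exponents sg2.
have /andP[azS /eqP eaz] : (a *: z \in S) && (eps (a *: z) == sg * eta).
  rewrite -walsh_part_neq0 // (walsh_part_scale_neq0 t_gt0 homog u_inv) //.
  by rewrite walsh_part_neq0 // zS ez eqxx.
by rewrite eaz -ez.
Qed.

Lemma supp_scale a z : a != 0 -> (a *: z \in S) = (z \in S).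
Proof.
move=> a_neq0; apply/idP/idP => [azS|zS]; last exact: (supp_eps_scale a_neq0 zS).1.
by rewrite -(scalerK a_neq0 z); apply: (supp_eps_scale _ azS).1; rewrite invr_eq0.
Qed.

Lemma B_scale e a z : a != 0 -> z \in [set x in S | eps x == e] ->
  a *: z \in [set x in S | eps x == e].
Proof.
move=> a_neq0 /setIdP[zS ez]; apply/setIdP.
by have [-> ->] := supp_eps_scale a_neq0 zS.
Qed.

Lemma fstar_homogeneous e : e ^+ 2 = 1 -> exists h : nat,
  [/\ (0 < h)%N, gcdn (h - 1) (p - 1) = 1%N &
    forall a : 'F_p, a != 0 -> forall z, z \in [set x in S | eps x == e] ->
      fstar (a *: z) = a ^+ h * fstar z].
Proof.
move=> e2; set sg := e * eta.
have sg2 : sg ^+ 2 = 1 by rewrite exprMn e2 eta_sign mulr1.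
have [t [u [t_gt0 _ u_co homog u_inv]]] := homogeneous_exponents sg2.
exists u.+1; split=> // [|a a_neq0 z]; first by rewrite subn1 (eqP u_co).
move=> /setIdP[zS /eqP ez]; apply: (fstar_scale sg2 t_gt0 homog u_inv) => //.
by rewrite ez -mulrA -expr2 eta_sign mulr1.
Qed.

Lemma eps0E : eps 0 = epss 0 * eta.
Proof.
have [t [u [t_gt0 t_even _ homog _]]] := homogeneous_exponents (epss_sign 0).
have := walsh_part0_neq0 homog t_even erefl.
by rewrite walsh_part_neq0 ?epss_sign // => /andP[_ /eqP].
Qed.

End ClassF.

Theorem lemma8 (p n s : nat) (M : 'M['F_p]_n) (f fstar : V p n -> 'F_p)
    (eps epss : V p n -> algC) :
  prime p -> odd p -> nondeg_symmetric M ->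
  plateaued M s f ->
  is_dual M s f eps fstar ->
  is_dual_sign M s f fstar epss ->
  classF M s f fstar epss ->
  (* (1) *)
  (forall a : 'F_p, a != 0 -> forall alpha : V p n,
     [/\ alpha \notin supp M s f -> a *: alpha \notin supp M s f,
         alpha \in Bplus M s f eps -> a *: alpha \in Bplus M s f eps
       & alpha \in Bminus M s f eps -> a *: alpha \in Bminus M s f eps]) /\
  (* (2) *)
  (exists h : nat, [/\ (0 < h)%N, gcdn (h - 1) (p - 1) = 1%N &
     forall a : 'F_p, a != 0 -> forall alpha, alpha \in Bplus M s f eps ->
       fstar (a *: alpha) = a ^+ h * fstar alpha]) /\
  (exists h' : nat, [/\ (0 < h')%N, gcdn (h' - 1) (p - 1) = 1%N &
     forall a : 'F_p, a != 0 -> forall alpha, alpha \in Bminus M s f eps ->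
       fstar (a *: alpha) = a ^+ h' * fstar alpha]) /\
  (* (3) *)
  (((p ^ (n + s)) %% 4 = 1)%N -> type_plus eps = type_plus epss) /\
  (((p ^ (n + s)) %% 4 = 3)%N -> type_plus eps != type_plus epss).
Proof.
move=> p_pr p_odd M_nondeg f_plat f_dual fstar_dual f_F.
have supp_sc := supp_scale p_pr p_odd M_nondeg f_plat f_dual fstar_dual f_F.
have B_sc := B_scale p_pr p_odd M_nondeg f_plat f_dual fstar_dual f_F.
have fstar_hom := fstar_homogeneous p_pr p_odd M_nondeg f_plat f_dual fstar_dual f_F.
have eps_0 := eps0E p_pr p_odd M_nondeg f_plat f_dual fstar_dual f_F.
split; [|split; [|split; [|split]]].
- by move=> a a_neq0 z; split; [rewrite supp_sc | exact: B_sc..].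
- exact: fstar_hom (expr1n _ _).
- by apply: fstar_hom; rewrite sqrrN expr1n.
- by rewrite /type_plus eps_0 sqr_mu => ->; rewrite mulr1.
- rewrite /type_plus eps_0 sqr_mu => ->; rewrite mulrN1 sign_oppr_eq1.
    by case: (_ == 1).
  exact: epss_sign fstar_dual 0.
Qed.
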